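(* Let $A=\mathbb{k}[x_1,\dots,x_N]$ and let $K_\bullet$ be its Koszul bimodule resolution (defined in the context). Define left $A$-module maps $t_{-1}\colon A\to A\otimes A$ by $t_{-1}(1)=1\otimes 1$, and, for $p\ge 0$, $t_p\colon K_p\to K_{p+1}$ on the left $A$-basis elements $1\otimes(x_{j_1}\wedge\cdots\wedge x_{j_p})\otimes \underline{x}^{\underline{\ell}}$ ($1\le j_1<\cdots<j_p\le N$, $\underline{\ell}\in\mathbb{N}^N$) by $$t_p\big(1\otimes(x_{j_1}\wedge\cdots\wedge x_{j_p})\otimes\underline{x}^{\underline{\ell}}\big)=(-1)^{p+1}\sum_{j_{p+1}=j_p+1}^{N}\ \sum_{r=1}^{\ell_{j_{p+1}}} x_{j_{p+1}}^{\ell_{j_{p+1}}-r}x_{j_{p+1}+1}^{\ell_{j_{p+1}+1}}\cdots x_N^{\ell_N}\otimes(x_{j_1}\wedge\cdots\wedge x_{j_{p+1}})\otimes x_1^{\ell_1}\cdots x_{j_{p+1}-1}^{\ell_{j_{p+1}-1}}x_{j_{p+1}}^{r-1},$$ with the convention $j_0=0$ when $p=0$ (so that $x_{j_1}\wedge\cdots\wedge x_{j_{p+1}}=x_{j_1}$ for $p=0$), and extended left $A$-linearly (the sum is empty, hence $t_p=0$ on such an element, if $j_p=N$). Then $d_0t_{-1}=\mathrm{Id}_A$ and $t_{p-1}d_p+d_{p+1}t_p=\mathrm{Id}_{K_p}$ for all $p\ge 0$; that is, $(t_p)_{p\ge -1}$ is a chain contraction of $K_\bullet$.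
   Context: $\mathbb{k}$ is a field, $V$ is a $\mathbb{k}$-vector space with basis $x_1,\dots,x_N$, and $A=S(V)=\mathbb{k}[x_1,\dots,x_N]$. For $\underline{\ell}=(\ell_1,\dots,\ell_N)\in\mathbb{N}^N$ write $\underline{x}^{\underline{\ell}}=x_1^{\ell_1}\cdots x_N^{\ell_N}$. The Koszul resolution $K_\bullet$ has $K_p=A\otimes\bigwedge^p(V)\otimes A$ ($0\le p\le N$; $K_p=0$ for $p>N$), a free $A$-bimodule with basis $1\otimes(x_{j_1}\wedge\cdots\wedge x_{j_p})\otimes 1$, $1\le j_1<\cdots<j_p\le N$; the augmentation $d_0\colon A\otimes A\to A$ is multiplication, and for $p\ge1$ the $A$-bimodule map $d_p$ is $$d_p(1\otimes(x_{j_1}\wedge\cdots\wedge x_{j_p})\otimes 1)=\sum_{i=1}^p(-1)^{i+1}x_{j_i}\otimes(x_{j_1}\wedge\cdots\widehat{x_{j_i}}\cdots\wedge x_{j_p})\otimes 1-\sum_{i=1}^p(-1)^{i+1}\otimes(x_{j_1}\wedge\cdots\widehat{x_{j_i}}\cdots\wedge x_{j_p})\otimes x_{j_i},$$ where the hat denotes omission. All tensor products are over $\mathbb{k}$. The maps $t_p$ are regarded as maps of complexes of left $A$-modules in the identity $t_{-1}d_0+d_1t_0=\mathrm{Id}$ on $K_0=A\otimes A$. *)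

From HB Require Import structures.
From mathcomp Require Import all_boot all_order all_algebra.
Set Implicit Arguments. Unset Strict Implicit. Unset Printing Implicit Defensive.
Import GRing.Theory.
Local Open Scope ring_scope.

(* Model: A = k[x_1..x_N] is the free k-vector space on monomials
   (exponent vectors mono := 'I_N -> nat, variables 0-indexed).
   K_p = A (x) /\^p V (x) A is the free k-vector space on triples
   (x^a, e_J, x^b) with J a subset of 'I_N of size p (e_J = ordered wedge).
   An element of a free k-vector space on a basis B is represented by a
   finite formal combination  seq (k * B); its coefficient function
   (coef) identifies it with a finitely supported function B -> k, and two
   representatives denote the same vector iff their coefficient functions
   agree.  k-linear maps are specified on basis vectors and extended
   linearly (lin_ext).  Left A-linearity of the maps is built in by
   defining them on all k-basis vectors x^a (x) e_J (x) x^b accordingly. *)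

Notation monoT N := {ffun 'I_N -> nat}.
Notation KbasisT N := (monoT N * {set 'I_N} * monoT N)%type.
Notation Aelt k N := (seq (k * monoT N)).
Notation Kelt k N := (seq (k * KbasisT N)).

Section Koszul.
Variables (k : fieldType) (N : nat).

Local Notation mono := (monoT N).
Local Notation Kbasis := (KbasisT N).
Local Notation Aelt := (Aelt k N).
Local Notation Kelt := (Kelt k N).

Definition mono_add (a b : mono) : mono := [ffun i => (a i + b i)%N].
Definition mono_unit (j : 'I_N) : mono := [ffun i => if i == j then 1%N else 0%N].
Definition mono1 : mono := [ffun _ => 0%N].


Definition coef (B : eqType) (v : seq (k * B)) (b : B) : k :=
  \sum_(c <- v | c.2 == b) c.1.

Definition lin_ext (B C : Type) (f : B -> seq (k * C)) (v : seq (k * B))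
  : seq (k * C) :=
  flatten [seq [seq (c.1 * e.1, e.2) | e <- f c.2] | c <- v].

Definition Kdeg (p : nat) (v : Kelt) : bool := all (fun c : k * Kbasis => #|c.2.1.2| == p) v.

(* d_0 : A (x) A -> A, multiplication (on K_0, J = set0) *)
Definition d0_basis (b : Kbasis) : Aelt := [:: (1, mono_add b.1.1 b.2)].
Definition d0 : Kelt -> Aelt := lin_ext d0_basis.

Definition tm1_basis (m : mono) : Kelt := [:: (1, (m, set0, mono1))].
Definition tm1 : Aelt -> Kelt := lin_ext tm1_basis.

(* d_p, p >= 1: j = j_i has position i = #{i' in J | i' < j} + 1,
   so (-1)^(i+1) = (-1)^#{i' in J | i' < j}. *)
Definition dK_basis (b : Kbasis) : Kelt :=
  let: (a, J, c) := b in
  flatten [seq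
    let s : k := (-1) ^+ #|[set i in J | (nat_of_ord i < nat_of_ord j)%N]| in
    [:: (s, (mono_add a (mono_unit j), J :\ j, c));
        (- s, (a, J :\ j, mono_add c (mono_unit j)))]
  | j <- enum J].
Definition dK : Kelt -> Kelt := lin_ext dK_basis.

(* t_p on x^a (x) e_J (x) x^l, p = #|J|; j ranges over indices larger
   than all elements of J (i.e. j_{p+1} > j_p, with j_0 = "0"), r in 1..l_j. *)
Definition tK_left (a l : mono) (j : 'I_N) (r : nat) : mono :=
  mono_add a [ffun i => if (nat_of_ord j < nat_of_ord i)%N then l i
                        else if i == j then (l j - r)%N else 0%N].
Definition tK_right (l : mono) (j : 'I_N) (r : nat) : mono :=
  [ffun i => if (nat_of_ord i < nat_of_ord j)%N then l i
             else if i == j then r.-1 else 0%N].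
Definition tK_basis (b : Kbasis) : Kelt :=
  let: (a, J, l) := b in
  let s : k := (-1) ^+ (#|J|.+1) in
  flatten [seq [seq (s, (tK_left a l j r, J :|: [set j], tK_right l j r))
               | r <- iota 1 (l j)]
          | j <- enum 'I_N & [forall i in J, (nat_of_ord i < nat_of_ord j)%N]].
Definition tK : Kelt -> Kelt := lin_ext tK_basis.

End Koszul.

From HB Require Import structures.
From mathcomp Require Import all_boot all_order all_algebra.
From mathcomp Require Import zify ring.
Import GRing.Theory.
Set Implicit Arguments. Unset Strict Implicit. Unset Printing Implicit Defensive.
Local Open Scope ring_scope.

(* Pairing a formal combination with an arbitrary functional G on the basis
   turns d and t into their transposes, so it suffices to check
   (d^T t^T + t^T d^T) G = G on each basis vector b = x^a (x) e_J (x) x^l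
   (with t_{-1} d_0 in place of t_{p-1} d_p when J is empty).  Let m = max J + 1
   and let [moved n] be the value of G at x^a x^(l on i >= n) (x) e_J (x)
   x^(l on i < n), so that [moved N] = G b.  In t(d b), the terms where d
   removes the index j just added by t telescope, first in r and then in j, to
   G b - [moved m]; all other terms are cross terms.  In d(t b), removing i in J
   on the left or on the right moves one factor x_i between the outer tensor
   factors: for j > i this produces the same cross terms with the opposite
   sign, for j < i the two contributions cancel, and j = i survives only when
   i = max J, where it gives [moved m]. *)


Section Pairing.
Variable k : fieldType.

Definition pairing (B : Type) (v : seq (k * B)) (G : B -> k) : k :=
  \sum_(c <- v) c.1 * G c.2.

Lemma pairing_cat (B : Type) (v w : seq (k * B)) G :
  pairing (v ++ w) G = pairing v G + pairing w G.
Proof. exact: big_cat. Qed.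

Lemma pairing_lin_ext (B C : Type) (f : B -> seq (k * C)) v G :
  pairing (lin_ext f v) G = pairing v (fun b => pairing (f b) G).
Proof.
rewrite /pairing /lin_ext big_flatten big_map; apply: eq_bigr => c _.
by rewrite big_map mulr_sumr; apply: eq_bigr => e _; rewrite mulrA.
Qed.

Lemma coef_pairing (B : eqType) (v : seq (k * B)) x :
  coef v x = pairing v (fun b => (b == x)%:R).
Proof.
rewrite /coef /pairing big_mkcond; apply: eq_bigr => c _.
by case: (c.2 == x); rewrite ?mulr1 ?mulr0.
Qed.

End Pairing.

Section Monomials.
Variable N : nat.
Implicit Types (a l : monoT N) (i j : 'I_N).

Definition mono_head l (n : nat) : monoT N :=
  [ffun i : 'I_N => if (i < n)%N then l i else 0%N].

Definition mono_tail l (n : nat) : monoT N :=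
  [ffun i : 'I_N => if (n <= i)%N then l i else 0%N].

Ltac mono_lia :=
  apply/ffunP => x; have := ltn_ord x;
  rewrite /tK_left /tK_right /mono_head /mono_tail /mono_add /mono_unit /mono1 !ffunE /= ?ffunE;
  repeat case: ifP => ?;
  repeat match goal with
  | H : is_true (_ == _) |- _ => move/eqP: H => H; subst
  | H : (_ == _) = false |- _ => move/negbT/eqP/(contra_not (@ord_inj _ _ _)): H => H
  end; lia.

Lemma mono_addm1 a : mono_add a (mono1 N) = a.
Proof. mono_lia. Qed.

Lemma mono_add_unit_eq l i : mono_add l (mono_unit i) i = (l i).+1.
Proof. by rewrite !ffunE eqxx addn1. Qed.

Lemma mono_add_unit_neq l i j : (i != j :> nat) -> mono_add l (mono_unit i) j = l j.
Proof. by move=> ij; rewrite !ffunE -val_eqE eq_sym (negbTE ij) addn0. Qed.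

Lemma mono_head0 l : mono_head l 0 = mono1 N.
Proof. mono_lia. Qed.

Lemma mono_headN l : mono_head l N = l.
Proof. mono_lia. Qed.

Lemma mono_tail0 l : mono_tail l 0 = l.
Proof. mono_lia. Qed.

Lemma mono_tailN l : mono_tail l N = mono1 N.
Proof. mono_lia. Qed.

Lemma tK_left0 a l j : tK_left a l j 0 = mono_add a (mono_tail l j).
Proof. mono_lia. Qed.

Lemma tK_left_full a l j : tK_left a l j (l j) = mono_add a (mono_tail l j.+1).
Proof. mono_lia. Qed.

Lemma tK_right1 l j : tK_right l j 1 = mono_head l j.
Proof. mono_lia. Qed.

Lemma tK_right_full l j : tK_right l j (l j).+1 = mono_head l j.+1.
Proof. mono_lia. Qed.

Lemma mulX_tK_left a l j r : (0 < r <= l j)%N ->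
  mono_add (tK_left a l j r) (mono_unit j) = tK_left a l j r.-1.
Proof. move=> ?; mono_lia. Qed.

Lemma mulX_tK_right l j r : (0 < r)%N ->
  mono_add (tK_right l j r) (mono_unit j) = tK_right l j r.+1.
Proof. move=> ?; mono_lia. Qed.

Lemma tK_left_mulXa a l i j r :
  tK_left (mono_add a (mono_unit i)) l j r = mono_add (tK_left a l j r) (mono_unit i).
Proof. mono_lia. Qed.

Lemma tK_left_mulXl_lt a l i j r : (i < j)%N ->
  tK_left a (mono_add l (mono_unit i)) j r = tK_left a l j r.
Proof. move=> ?; mono_lia. Qed.

Lemma tK_right_mulXl_lt l i j r : (i < j)%N ->
  tK_right (mono_add l (mono_unit i)) j r = mono_add (tK_right l j r) (mono_unit i).
Proof. move=> ?; mono_lia. Qed.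

Lemma tK_right_mulXl_ge l i j r : (j <= i)%N ->
  tK_right (mono_add l (mono_unit i)) j r = tK_right l j r.
Proof. move=> ?; mono_lia. Qed.

Lemma tK_left_mulXl_gt a l i j r : (j < i)%N ->
  tK_left a (mono_add l (mono_unit i)) j r = tK_left (mono_add a (mono_unit i)) l j r.
Proof. move=> ?; mono_lia. Qed.

Lemma tK_left_mulXl_eq a l i r : (r <= l i)%N ->
  tK_left a (mono_add l (mono_unit i)) i r = tK_left (mono_add a (mono_unit i)) l i r.
Proof. move=> ?; mono_lia. Qed.

Lemma tK_left_mulXl_full a l i :
  tK_left a (mono_add l (mono_unit i)) i (l i).+1 = mono_add a (mono_tail l i.+1).
Proof. mono_lia. Qed.

End Monomials.

Section Indices.
Variable N : nat.
Implicit Types (J : {set 'I_N}) (i j : 'I_N).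

Definition above J j : bool := [forall i in J, (i < j)%N].

Definition bound J : nat := (\max_(i in J) (nat_of_ord i).+1)%N.

Lemma aboveE J j : above J j = (bound J <= j)%N.
Proof.
apply/forallP/bigmax_leqP => H i; first by move=> iJ; have := H i; rewrite iJ.
by apply/implyP => iJ; exact: H.
Qed.

Lemma bound_le J : (bound J <= N)%N.
Proof. by apply/bigmax_leqP => i _; exact: ltn_ord. Qed.

Lemma bound0 : bound set0 = 0%N.
Proof. by rewrite /bound big_set0. Qed.

Lemma above_lt J i j : above J j -> i \in J -> (i < j)%N.
Proof. by move=> /forallP H iJ; have := H i; rewrite iJ. Qed.

Lemma above_notin J j : above J j -> j \notin J.
Proof. by move=> H; apply/negP => /(above_lt H); rewrite ltnn. Qed.

Lemma above_setD1 J i j : above J j -> above (J :\ i) j.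
Proof.
move=> /forallP H; apply/forallP => x; apply/implyP; rewrite !inE => /andP [_ xJ].
by have := H x; rewrite xJ.
Qed.

Lemma above_setD1_le J i j : i \in J -> above (J :\ i) j -> ~~ above J j -> (j <= i)%N.
Proof.
move=> iJ /forallP H; rewrite /above negb_forall => /existsP [x].
rewrite negb_imply => /andP [xJ xj].
case: (eqVneq x i) => [E|xi]; first by move: xj; rewrite E -leqNgt.
by have := H x; rewrite !inE xi xJ /= (negbTE xj).
Qed.

Lemma above_sepE J j : above J j -> [set x in J | (x < j)%N] = J.
Proof.
move=> H; apply/setP => x; rewrite !inE andb_idr //; exact: above_lt.
Qed.

Lemma setU1_D1 J i j : i != j -> (J :|: [set j]) :\ i = J :\ i :|: [set j].
Proof.
move=> ij; apply/setP => x; rewrite !inE; case: (eqVneq x j) => [->|] /=.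
  by rewrite eq_sym ij orbT.
by rewrite !orbF.
Qed.

Lemma setU1_lt_above J i j : above J j -> (i <= j)%N ->
  [set x in J :|: [set j] | (x < i)%N] = [set x in J | (x < i)%N].
Proof.
move=> H ij; apply/setP => x; rewrite !inE; case: (eqVneq x j) => [->|] /=.
  by rewrite (negbTE (above_notin H)) ltnNge ij.
by rewrite orbF.
Qed.

End Indices.

Lemma telescope_iota (k : zmodType) (f : nat -> k) n :
  \sum_(r <- iota 1 n) (f r.-1 - f r) = f 0%N - f n.
Proof.
have -> : iota 1 n = index_iota 1 n.+1 by rewrite /index_iota subn1.
rewrite (telescope_sumr_eq (fun r => - f r.-1)) // => [|r _]; last by rewrite opprK addrC.
by rewrite opprK addrC.
Qed.

Section Transposes.
Variables (k : fieldType) (N : nat).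
Local Notation mono := (monoT N).
Local Notation Kbasis := (KbasisT N).
Implicit Types (G : Kbasis -> k) (a l : mono) (J : {set 'I_N}) (i j : 'I_N).

Definition wedge_sign J j : k := (-1) ^+ #|[set i in J | (i < j)%N]|.

Definition dK_dual G (b : Kbasis) : k :=
  let: (a, J, c) := b in
  \sum_(j in J) wedge_sign J j *
    (G (mono_add a (mono_unit j), J :\ j, c) - G (a, J :\ j, mono_add c (mono_unit j))).

Definition tK_terms G a J l j : k :=
  \sum_(r <- iota 1 (l j)) G (tK_left a l j r, J :|: [set j], tK_right l j r).

Definition tK_dual G (b : Kbasis) : k :=
  let: (a, J, l) := b in (-1) ^+ #|J|.+1 * \sum_(j | above J j) tK_terms G a J l j.

Lemma pairing_dK G (v : Kelt k N) : pairing (dK v) G = pairing v (dK_dual G).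
Proof.
rewrite pairing_lin_ext; apply: eq_bigr => -[x [[a J] c]] _ /=.
rewrite /pairing big_flatten big_map big_enum; congr (x * _); apply: eq_bigr => j _.
by rewrite !big_cons big_nil /= addr0 mulNr mulrBr.
Qed.

Lemma pairing_tK G (v : Kelt k N) : pairing (tK v) G = pairing v (tK_dual G).
Proof.
rewrite pairing_lin_ext; apply: eq_bigr => -[x [[a J] l]] _ /=.
rewrite /pairing big_flatten big_map big_filter; congr (x * _).
rewrite mulr_sumr big_enum_cond /=; apply: eq_big => // j _.
by rewrite big_map mulr_sumr.
Qed.

Lemma pairing_d0 (G : mono -> k) (v : Kelt k N) :
  pairing (d0 v) G = pairing v (fun b => G (mono_add b.1.1 b.2)).
Proof. by rewrite pairing_lin_ext; apply: eq_bigr => c _; rewrite /pairing big_seq1 mul1r. Qed.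

Lemma pairing_tm1 G (v : Aelt k N) :
  pairing (tm1 v) G = pairing v (fun m => G (m, set0, mono1 N)).
Proof. by rewrite pairing_lin_ext; apply: eq_bigr => c _; rewrite /pairing big_seq1 mul1r. Qed.

Lemma pairing_d0_tm1 (G : mono -> k) (v : Aelt k N) : pairing (d0 (tm1 v)) G = pairing v G.
Proof. by rewrite pairing_d0 pairing_tm1; apply: eq_bigr => c _; rewrite /= mono_addm1. Qed.

Definition moved G a J l (n : nat) : k :=
  G (mono_add a (mono_tail l n), J, mono_head l n).

Definition cross_term G a J l i j : k :=
  \sum_(r <- iota 1 (l j))
    (G (mono_add (tK_left a l j r) (mono_unit i), J :\ i :|: [set j], tK_right l j r)
   - G (tK_left a l j r, J :\ i :|: [set j], mono_add (tK_right l j r) (mono_unit i))).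

Definition cross_sum G a J l : k :=
  \sum_(j | above J j) \sum_(i in J) wedge_sign J i * cross_term G a J l i j.

Lemma dK_dual_setU1 G a J c j : above J j ->
  dK_dual G (a, J :|: [set j], c) =
    (-1) ^+ #|J| * (G (mono_add a (mono_unit j), J, c) - G (a, J, mono_add c (mono_unit j)))
  + \sum_(i in J) wedge_sign J i * (G (mono_add a (mono_unit i), J :\ i :|: [set j], c)
                                  - G (a, J :\ i :|: [set j], mono_add c (mono_unit i))).
Proof.
move=> Jj; rewrite /= (bigD1 j) /=; last by rewrite !inE eqxx orbT.
have -> : (J :|: [set j]) :\ j = J by rewrite setUC setU1K ?above_notin.
rewrite /wedge_sign setU1_lt_above // above_sepE //; congr (_ + _).
apply: eq_big => [i|i /andP [iJj ij]].
  rewrite !inE; case: (eqVneq i j) => [->|] /=; first by rewrite (negbTE (above_notin Jj)).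
  by rewrite orbF andbT.
have iJ : i \in J by move: iJj; rewrite !inE (negbTE ij) orbF.
by rewrite setU1_lt_above ?(ltnW (above_lt Jj iJ)) // setU1_D1.
Qed.

Lemma tK_terms_diagonal G a J l j :
  \sum_(r <- iota 1 (l j)) (G (mono_add (tK_left a l j r) (mono_unit j), J, tK_right l j r)
                           - G (tK_left a l j r, J, mono_add (tK_right l j r) (mono_unit j)))
  = moved G a J l j - moved G a J l j.+1.
Proof.
pose f r := G (tK_left a l j r, J, tK_right l j r.+1).
rewrite (eq_big_seq (fun r => f r.-1 - f r)).
  by rewrite telescope_iota /f tK_left0 tK_right1 tK_left_full tK_right_full.
move=> r; rewrite mem_iota add1n ltnS => /andP [r_gt0 r_le].
by rewrite mulX_tK_left ?r_gt0 // mulX_tK_right // prednK.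
Qed.

Lemma tK_terms_dK_dual G a J l j : above J j ->
  tK_terms (dK_dual G) a J l j =
    (-1) ^+ #|J| * (moved G a J l j - moved G a J l j.+1)
  + \sum_(i in J) wedge_sign J i * cross_term G a J l i j.
Proof.
move=> Jj; rewrite /tK_terms (eq_bigr _ (fun r _ => dK_dual_setU1 G _ _ Jj)).
rewrite big_split /= -mulr_sumr tK_terms_diagonal; congr (_ + _).
by rewrite exchange_big /=; apply: eq_bigr => i _; rewrite /cross_term mulr_sumr.
Qed.

Lemma tK_dual_dK_dual G a J l :
  tK_dual (dK_dual G) (a, J, l)
  = G (a, J, l) - moved G a J l (bound J) + (-1) ^+ #|J|.+1 * cross_sum G a J l.
Proof.
rewrite /= (eq_bigr _ (fun j Jj => tK_terms_dK_dual G a l Jj)) big_split /= mulrDr.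
congr (_ + _); rewrite -mulr_sumr exprS mulN1r mulNr signrMK.
rewrite (eq_bigl (fun j : 'I_N => true && (bound J <= j)%N)) => [|j]; last by rewrite aboveE.
rewrite -(@big_geq_mkord _ _ _ (bound J) N xpredT (fun n => moved G a J l n - moved G a J l n.+1)).
rewrite -sumrN (eq_bigr (fun n => moved G a J l n.+1 - moved G a J l n)) => [|n _];
  last by rewrite opprB.
by rewrite telescope_sumr ?bound_le // /moved mono_tailN mono_addm1 mono_headN.
Qed.

Lemma tK_terms_mulX_lt G a J l i j : (i < j)%N ->
  tK_terms G (mono_add a (mono_unit i)) (J :\ i) l j
  - tK_terms G a (J :\ i) (mono_add l (mono_unit i)) j = cross_term G a J l i j.
Proof.
move=> ij; rewrite /tK_terms mono_add_unit_neq ?neq_ltn ?ij // -sumrB.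
by apply: eq_bigr => r _; rewrite tK_left_mulXa tK_left_mulXl_lt // tK_right_mulXl_lt.
Qed.

Lemma tK_terms_mulX_gt G a J l i j : (j < i)%N ->
  tK_terms G (mono_add a (mono_unit i)) J l j = tK_terms G a J (mono_add l (mono_unit i)) j.
Proof.
move=> ji; rewrite /tK_terms mono_add_unit_neq ?neq_ltn ?ji ?orbT //.
by apply: eq_bigr => r _; rewrite tK_left_mulXl_gt // tK_right_mulXl_ge // ltnW.
Qed.

Lemma tK_terms_mulX_eq G a J l i :
  tK_terms G (mono_add a (mono_unit i)) J l i - tK_terms G a J (mono_add l (mono_unit i)) i
  = - moved G a (J :|: [set i]) l i.+1.
Proof.
rewrite /tK_terms mono_add_unit_eq -[(l i).+1]addn1 iotaD big_cat big_seq1 add1n.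
rewrite tK_left_mulXl_full tK_right_mulXl_ge // tK_right_full opprD addrA.
rewrite [X in _ - X - _](eq_big_seq (fun r => G (tK_left (mono_add a (mono_unit i)) l i r,
                                            J :|: [set i], tK_right l i r))) ?subrr ?sub0r //.
move=> r; rewrite mem_iota add1n ltnS => /andP [_ r_le].
by rewrite tK_left_mulXl_eq // tK_right_mulXl_ge.
Qed.

Lemma tK_dual_mulX_diff G a J l i : i \in J ->
  tK_dual G (mono_add a (mono_unit i), J :\ i, l) - tK_dual G (a, J :\ i, mono_add l (mono_unit i))
  = (-1) ^+ #|J| * (\sum_(j | above J j) cross_term G a J l i j
                    - (if above (J :\ i) i then moved G a J l i.+1 else 0)).
Proof.
move=> iJ; rewrite /=.
have -> : #|J :\ i|.+1 = #|J| by rewrite [in RHS](cardsD1 i) iJ.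
rewrite -mulrBr -sumrB (bigID (above J)) /=; congr (_ * (_ + _)).
  apply: eq_big => [j|j /andP [_ Jj]]; last exact: tK_terms_mulX_lt (above_lt Jj iJ).
  by case Jj: (above J j); rewrite ?andbT ?andbF ?above_setD1.
have Ji : ~~ above J i by apply: contraL iJ; exact: above_notin.
rewrite (eq_bigr (fun j => if j == i then - moved G a J l i.+1 else 0)) => [|j /andP [J'j Jj]].
  case: ifP => [J'i|J'i]; last first.
    by rewrite oppr0 big1 // => j /andP [J'j _]; case: eqP J'j => // ->; rewrite J'i.
  by rewrite (bigD1 i) ?J'i ?Ji //= eqxx big1 ?addr0 // => j /andP [_ /negbTE ->].
case: eqP => [->|/eqP ji]; first by rewrite tK_terms_mulX_eq setUC setD1K.
have ji' : (j < i)%N by rewrite ltn_neqAle (above_setD1_le iJ J'j Jj) andbT.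
by rewrite tK_terms_mulX_gt // subrr.
Qed.

Lemma sum_wedge_sign_top G a J l : (0 < #|J|)%N ->
  \sum_(i in J) wedge_sign J i * (if above (J :\ i) i then moved G a J l i.+1 else 0)
  = - ((-1) ^+ #|J| * moved G a J l (bound J)).
Proof.
move=> J0; have [i0 i0J bound_i0] := eq_bigmax_cond (fun i : 'I_N => (nat_of_ord i).+1) J0.
rewrite -/(bound J) in bound_i0.
have below_i0 x : x \in J -> x != i0 -> (x < i0)%N.
  move=> xJ xi0; have : (x < bound J)%N by exact: leq_bigmax_cond.
  rewrite bound_i0 ltnS leq_eqVlt => /orP [/eqP/ord_inj x_eq|//].
  by rewrite x_eq eqxx in xi0.
rewrite (bigD1 i0) //= big1 ?addr0 => [|i /andP [iJ ii0]]; last first.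
  case: ifP => [J'i|]; last by rewrite mulr0.
  have := below_i0 i iJ ii0; rewrite ltnNge ltnW //.
  by apply: (above_lt J'i); rewrite !inE eq_sym ii0.
have J'i0 : above (J :\ i0) i0.
  by apply/forallP => x; apply/implyP; rewrite !inE => /andP [xi0 xJ]; exact: below_i0.
rewrite /wedge_sign; have -> : [set x in J | (x < i0)%N] = J :\ i0.
  apply/setP => x; rewrite !inE; case: (eqVneq x i0) => [->|xi0] /=; first by rewrite ltnn andbF.
  by rewrite andb_idr // => xJ; exact: below_i0.
by rewrite J'i0 bound_i0 [in RHS](cardsD1 i0 J) i0J exprS mulN1r mulNr opprK.
Qed.

Lemma dK_dual_tK_dual G a J l : (0 < #|J|)%N ->
  dK_dual (tK_dual G) (a, J, l)
  = moved G a J l (bound J) - (-1) ^+ #|J|.+1 * cross_sum G a J l.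
Proof.
move=> J0; rewrite /=.
rewrite (eq_bigr (fun i =>
   (-1) ^+ #|J| * (wedge_sign J i * \sum_(j | above J j) cross_term G a J l i j)
 - (-1) ^+ #|J| * (wedge_sign J i * (if above (J :\ i) i then moved G a J l i.+1 else 0))));
  last by move=> i iJ; rewrite tK_dual_mulX_diff // mulrCA !mulrBr.
rewrite sumrB -!mulr_sumr sum_wedge_sign_top //.
have -> : \sum_(i in J) wedge_sign J i * \sum_(j | above J j) cross_term G a J l i j
          = cross_sum G a J l.
  by rewrite /cross_sum exchange_big; apply: eq_bigr => i _; rewrite mulr_sumr.
by rewrite mulrN opprK signrMK exprS mulN1r mulNr opprK addrC.
Qed.

Lemma dK_tK_homotopy G (b : Kbasis) : (0 < #|b.1.2|)%N ->
  dK_dual (tK_dual G) b + tK_dual (dK_dual G) b = G b.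
Proof. by case: b => [[a J] l] J0; rewrite dK_dual_tK_dual // tK_dual_dK_dual; ring. Qed.

Lemma tm1_d0_homotopy G (b : Kbasis) : #|b.1.2| = 0%N ->
  G (mono_add b.1.1 b.2, set0, mono1 N) + tK_dual (dK_dual G) b = G b.
Proof.
case: b => [[a J] l] J0; have -> : J = set0 by apply/eqP; rewrite -cards_eq0 -J0.
rewrite tK_dual_dK_dual /cross_sum bound0 /moved mono_tail0 mono_head0.
rewrite (eq_bigr (fun _ => 0)) => [|j _]; last by rewrite big_set0.
by rewrite big1 // mulr0 addr0 addrC subrK.
Qed.

Lemma pairing_homotopy p (v : Kelt k N) G : Kdeg p v ->
  pairing ((if p is 0 then tm1 (d0 v) else tK (dK v)) ++ dK (tK v)) G = pairing v G.
Proof.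
move=> /allP deg_v; rewrite pairing_cat pairing_dK pairing_tK.
case: p deg_v => [|p] deg_v.
  rewrite pairing_tm1 pairing_d0 /pairing -big_split; apply: eq_big_seq => c /deg_v /eqP c0.
  by rewrite /= -mulrDr tm1_d0_homotopy.
rewrite pairing_tK pairing_dK /pairing -big_split; apply: eq_big_seq => c /deg_v /eqP cp.
by rewrite /= -mulrDr dK_tK_homotopy // cp.
Qed.

End Transposes.

Theorem mainTheorem2 (k : fieldType) (N : nat) :
  (* d_0 t_{-1} = Id_A *)
  (forall v : Aelt k N, coef (d0 (tm1 v)) =1 coef v) /\
  (* t_{p-1} d_p + d_{p+1} t_p = Id_{K_p} for all p >= 0 *)
  (forall (p : nat) (v : Kelt k N), Kdeg p v ->
     coef ((if p is 0 then tm1 (d0 v) else tK (dK v)) ++ dK (tK v)) =1 coef v).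
Proof.
split=> [v x | p v deg_v x]; rewrite !coef_pairing.
  exact: pairing_d0_tm1.
exact: pairing_homotopy.
Qed.
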